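(* Let $I_o\subseteq\mathbf{EFSym}$ be the subspace spanned by the $\mathbf S^f$ with $f$ not acyclic (i.e. $f$ has a cycle of length $\ge2$). Then $I_o$ is a Hopf ideal of $\mathbf{EFSym}$, and the quotient $\mathbf{EFSym}/I_o$ is isomorphic, as a Hopf algebra, to the Hopf subalgebra spanned by the $\mathbf S^\phi$ with $\phi$ acyclic, hence to $\mathbf H_o$.
   Context: $\mathbf{EFSym}$: over $A=\{a_{ij}:i\ne j,\ i,j\ge1\}$ with $a_{ij}\prec a_{kl}$ iff $j=k$, for $f:[n]\to[n]$, $\mathbf S^f$ is the sum of words $w_1\cdots w_n$ over $A$ with $w_{f(j)}\prec w_j$ whenever $f(j)\ne j$; these are linearly independent and span $\mathbf{EFSym}$, with product $\mathbf S^f\mathbf S^g=\mathbf S^{f\bullet g}$ (shifted concatenation: $i\mapsto f(i)$ for $i\le n$, $n+i\mapsto g(i)+n$) and coproduct $\Delta\mathbf S^f=\sum_{I\models f}\mathbf S^{\mathrm{std}(f^{[n]\setminus I})}\otimes\mathbf S^{\mathrm{std}(f^I)}$, where $I\models f$ means $f^{-1}(I)\subseteq I$, $f^I(x)=f(x)$ if $f(x)\in I$ and $x$ otherwise, and $\mathrm{std}$ conjugates by the increasing bijection $I\to[|I|]$. $\mathbf H_o$ is the Hopf algebra of ordered forests (rooted forests on vertex set $[n]$, product by shifted disjoint union, coproduct by admissible cuts), identified with the span of $\mathbf S^\phi$, $\phi$ acyclic, via $\mathcal F\mapsto\mathbf S^{f_{\mathcal F}}$ where $f_{\mathcal F}$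 maps each vertex to its parent and fixes roots. *)

From HB Require Import structures.
From mathcomp Require Import all_boot all_order all_algebra.
Set Implicit Arguments. Unset Strict Implicit. Unset Printing Implicit Defensive.
Import Order.TTheory GRing.Theory.
Local Open Scope ring_scope.

(* Basis of EFSym: endofunctions f : [n] -> [n]  (here 'I_n -> 'I_n),  *)
(* for all n.  The basis element S^f is the pair (n, f).              *)
Definition EF := {n : nat & {ffun 'I_n -> 'I_n}}.
Definition efdeg (b : EF) : nat := tag b.

(* f is acyclic: no cycle of length >= 2, i.e. every periodic point is a
   fixed point. *)
Definition acyclic n (f : {ffun 'I_n -> 'I_n}) : Prop :=
  forall (x : 'I_n) (k : nat), iter k.+1 f x = x -> f x = x.
Definition acyclicB (b : EF) : Prop := acyclic (tagged b).
Definition nonacyclicB (b : EF) : Prop := ~ acyclicB b.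

(* Finite formal linear combinations over a basis B (elements of the  *)
(* free K-module on B), compared through their coefficients.          *)
Definition lc (K : fieldType) (B : eqType) := seq (K * B).

Definition coef (K : fieldType) (B : eqType) (x : lc K B) (b : B) : K :=
  \sum_(p <- x) (if p.2 == b then p.1 else 0).

Definition lceq (K : fieldType) (B : eqType) (x y : lc K B) : Prop :=
  forall b, coef x b = coef y b.

Definition lcscale (K : fieldType) (B : eqType) (c : K) (x : lc K B) : lc K B :=
  [seq (c * q.1, q.2) | q <- x].

Definition lcopp (K : fieldType) (B : eqType) (x : lc K B) : lc K B :=
  lcscale (-1) x.

Definition lcext (K : fieldType) (B C : eqType) (F : B -> lc K C) (x : lc K B)
  : lc K C := flatten [seq lcscale p.1 (F p.2) | p <- x].

Definition inSpan (K : fieldType) (B : eqType) (P : B -> Prop) (x : lc K B)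
  : Prop := forall b, ~ P b -> coef x b = 0.

Definition shconc n m (f : {ffun 'I_n -> 'I_n}) (g : {ffun 'I_m -> 'I_m})
  : {ffun 'I_(n + m) -> 'I_(n + m)} :=
  [ffun i => match split i with
             | inl j => lshift m (f j)
             | inr j => rshift n (g j)
             end].

Definition mulB (a b : EF) : EF :=
  Tagged (fun k => {ffun 'I_k -> 'I_k}) (shconc (tagged a) (tagged b)).

Definition efmul (K : fieldType) (x y : lc K EF) : lc K EF :=
  lcext (fun a => lcext (fun b => [:: (1, mulB a b)]) y) x.

Definition ef_empty : EF :=
  Tagged (fun k => {ffun 'I_k -> 'I_k}) ([ffun i => i] : {ffun 'I_0 -> 'I_0}).

Definition efunit (K : fieldType) : lc K EF := [:: (1, ef_empty)].

(* f^I restricted to I (f^I(x) = f(x) if f(x) in I, x otherwise), then *)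
(* standardised by the increasing bijection I -> [|I|] (enum_val is    *)
(* increasing since enum 'I_n is increasing).                          *)
Definition stdres n (f : {ffun 'I_n -> 'I_n}) (I : {set 'I_n})
  : {ffun 'I_#|I| -> 'I_#|I|} :=
  [ffun i : 'I_#|I| =>
     let y := f (enum_val i) in
     if y \in I then insubd i (index y (enum I)) else i].

Definition admissible n (f : {ffun 'I_n -> 'I_n}) (I : {set 'I_n}) : bool :=
  f @^-1: I \subset I.

Definition mkEF m (g : {ffun 'I_m -> 'I_m}) : EF :=
  Tagged (fun k => {ffun 'I_k -> 'I_k}) g.

Definition coprodB (K : fieldType) (b : EF) : lc K (prod EF EF) :=
  let: existT n f := b in
  [seq (1, (mkEF (stdres f (~: A)), mkEF (stdres f A)))
  | A <- enum [pred A : {set 'I_n} | admissible f A]].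

Definition efcop (K : fieldType) (x : lc K EF) : lc K (prod EF EF) :=
  lcext (@coprodB K) x.

Definition efcounit (K : fieldType) (x : lc K EF) : K :=
  \sum_(p <- x) (if efdeg p.2 == 0%N then p.1 else 0).

(* Antipode: the unique one of the graded connected bialgebra,         *)
(* S(1) = 1 and for deg f > 0:                                         *)
(*   S(S^f) = - sum_{I |= f, I <> empty} S(S^{std f^{[n]\I}}) S^{std f^I} *)
(* (the term I = empty is S^f (x) 1).  Defined with fuel = degree + 1. *)
Fixpoint antipF (K : fieldType) (k : nat) (b : EF) : lc K EF :=
  match k with
  | 0 => [::]
  | k'.+1 =>
    let: existT n f := b in
    if n == 0%N then [:: (1, b)] else
    lcopp (flatten
      [seq efmul (antipF K k' (mkEF (stdres f (~: A)))) [:: (1, mkEF (stdres f A))]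
      | A <- enum [pred A : {set 'I_n} | admissible f A && (A != set0)]])
  end.

Definition antipB (K : fieldType) (b : EF) : lc K EF := antipF K (efdeg b).+1 b.

Definition efantipode (K : fieldType) (x : lc K EF) : lc K EF :=
  lcext (@antipB K) x.

(* Hopf ideal / Hopf subalgebra for a subspace spanned by the basis    *)
(* elements satisfying P.  For such J, J (x) H + H (x) J is the span of *)
(* the b1 (x) b2 with P b1 or P b2.                                    *)
Definition hopf_ideal (K : fieldType) (P : EF -> Prop) : Prop :=
  [/\ (forall x y : lc K EF, inSpan P x ->
         inSpan P (efmul x y) /\ inSpan P (efmul y x)),
      (forall x : lc K EF, inSpan P x ->
         forall b1 b2, ~ P b1 -> ~ P b2 -> coef (efcop x) (b1, b2) = 0),
      (forall x : lc K EF, inSpan P x -> efcounit x = 0)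
    & (forall x : lc K EF, inSpan P x -> inSpan P (efantipode x))].

Definition hopf_subalgebra (K : fieldType) (P : EF -> Prop) : Prop :=
  [/\ inSpan P (efunit K),
      (forall x y : lc K EF, inSpan P x -> inSpan P y -> inSpan P (efmul x y)),
      (forall x : lc K EF, inSpan P x ->
         forall b1 b2, ~ (P b1 /\ P b2) -> coef (efcop x) (b1, b2) = 0)
    & (forall x : lc K EF, inSpan P x -> inSpan P (efantipode x))].

Definition tensor_map (K : fieldType) (F : EF -> lc K EF) (t : lc K (prod EF EF))
  : lc K (prod EF EF) :=
  lcext (fun p : prod EF EF =>
          [seq (a.1 * c.1, (a.2, c.2)) | a <- F p.1, c <- F p.2]) t.

Definition hopf_morphism (K : fieldType) (phi : EF -> lc K EF) : Prop :=
  [/\ lceq (lcext phi (efunit K)) (efunit K),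
      (forall x y : lc K EF,
         lceq (lcext phi (efmul x y)) (efmul (lcext phi x) (lcext phi y))),
      (forall x : lc K EF,
         lceq (efcop (lcext phi x)) (tensor_map phi (efcop x))),
      (forall x : lc K EF, efcounit (lcext phi x) = efcounit x)
    & (forall x : lc K EF,
         lceq (lcext phi (efantipode x)) (efantipode (lcext phi x)))].

From HB Require Import structures.
From mathcomp Require Import all_boot all_order all_algebra.
Set Implicit Arguments. Unset Strict Implicit. Unset Printing Implicit Defensive.

(* Acyclicity behaves like a grading for every structure map.  A shifted
   concatenation is acyclic iff both factors are.  For an admissible cut I of f,
   the pieces std(f^([n]\I)) and std(f^I) are both acyclic iff f is: restricting
   only freezes points, which cannot create cycles, and since I is closed under
   f-preimages every cycle of f lies entirely inside I or entirely outside it,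
   where the corresponding restriction agrees with f.  By induction the same
   holds for the terms of the antipode.  Hence products, coproducts and antipodes
   of basis elements only involve basis elements of the expected class, so the
   span of the non-acyclic S^f is a Hopf ideal, the span of the acyclic ones a
   Hopf subalgebra, and the projection killing non-acyclic basis elements is a
   Hopf morphism onto the latter with kernel the former. *)

Definition cycle_free (T : Type) (h : T -> T) : Prop :=
  forall x k, iter k.+1 h x = x -> h x = x.

Lemma cycle_free_freeze (T : eqType) (h g : T -> T) :
  cycle_free h -> (forall z, g z = h z \/ g z = z) -> cycle_free g.
Proof.
move=> h_free g_freeze x k gk.
pose moving t := g (iter t g x) != iter t g x.
have [/allP all_moving | /allPn [t]] := boolP (all moving (iota 0 k.+1)); last first.
  rewrite mem_iota add0n => lt_tk /negPn /eqP fixed.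
  have -> : x = iter t g x.
    by rewrite -{1}gk -(subnK (ltnW lt_tk)) iterD iter_fix.
  exact: fixed.
have agree t : t <= k.+1 -> iter t g x = iter t h x.
  elim: t => [//|t IH] lt_tk.
  rewrite !iterS -IH ?(ltnW lt_tk) //.
  have := all_moving t; rewrite mem_iota add0n lt_tk => /(_ isT).
  by rewrite /moving; case: (g_freeze (iter t g x)) => ->; rewrite ?eqxx.
have gx : g x = h x by rewrite -[g x]/(iter 1 g x) agree.
by rewrite gx (h_free x k) // -agree.
Qed.

(* [fconnect f (f x) x] says that x lies on a cycle of f. *)
Definition acyclicb n (f : {ffun 'I_n -> 'I_n}) : bool :=
  [forall x, fconnect f (f x) x ==> (f x == x)].

Lemma acyclicP n (f : {ffun 'I_n -> 'I_n}) : reflect (acyclic f) (acyclicb f).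
Proof.
apply: (iffP forallP) => [on_cycle x k fk | f_acyc x].
  by apply/eqP; have := on_cycle x; rewrite -{2}fk iterSr fconnect_iter.
by apply/implyP => /iter_findex; rewrite -iterSr => /f_acyc ->.
Qed.

Section Restriction.
Variables (n : nat) (f : {ffun 'I_n -> 'I_n}).

Definition restr (I : {set 'I_n}) (y : 'I_n) : 'I_n :=
  if f y \in I then f y else y.

Lemma enum_val_stdres (I : {set 'I_n}) (i : 'I_#|I|) :
  enum_val (stdres f I i) = restr I (enum_val i).
Proof.
rewrite /stdres /restr ffunE /=; case: ifP => // yI.
set y := f (enum_val i).
have lt_y : index y (enum I) < #|I| by rewrite cardE index_mem mem_enum.
by rewrite (enum_val_nth y) val_insubd lt_y nth_index // mem_enum.
Qed.

Lemma enum_val_iter_stdres (I : {set 'I_n}) (i : 'I_#|I|) t :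
  enum_val (iter t (stdres f I) i) = iter t (restr I) (enum_val i).
Proof. by elim: t => //= t IH; rewrite enum_val_stdres IH. Qed.

Lemma acyclic_stdresE (I : {set 'I_n}) :
  acyclic (stdres f I) <->
  (forall x k, x \in I -> iter k.+1 (restr I) x = x -> restr I x = x).
Proof.
split=> [acyc x k xI cyc | acycI i k cyc].
  rewrite -(enum_rankK_in xI xI) -enum_val_stdres; congr enum_val.
  by apply: (acyc _ k); apply: enum_val_inj; rewrite enum_val_iter_stdres enum_rankK_in.
apply: enum_val_inj; rewrite enum_val_stdres (acycI _ k) ?enum_valP //.
by rewrite -enum_val_iter_stdres cyc.
Qed.

Lemma acyclic_stdres (I : {set 'I_n}) : acyclic f -> acyclic (stdres f I).
Proof.
move=> f_acyc; apply/acyclic_stdresE => x k _.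
apply: (@cycle_free_freeze _ f) => [y l|z]; first exact: f_acyc.
by rewrite /restr; case: ifP; [left | right].
Qed.

Lemma iter_restr (I : {set 'I_n}) x :
  (forall t, iter t f x \in I) -> forall t, iter t (restr I) x = iter t f x.
Proof. by move=> orbitI; elim=> //= t ->; rewrite /restr -iterS orbitI. Qed.

Lemma admissible_iter (A : {set 'I_n}) y t :
  admissible f A -> iter t f y \in A -> y \in A.
Proof.
move=> /subsetP closed; elim: t y => // t IH y.
by rewrite iterSr => /IH fy; apply: closed; rewrite inE.
Qed.

Lemma admissible_cycle (A : {set 'I_n}) x k t :
  admissible f A -> iter k.+1 f x = x -> (iter t f x \in A) = (x \in A).
Proof.
move=> adm cyc; apply/idP/idP; first exact: admissible_iter.
have back : iter (t.+1 * k.+1 - t) f (iter t f x) = x.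
  rewrite -iterD subnK; first by rewrite iterM iter_fix.
  by rewrite mulnS (leq_trans (leqnSn t)) ?leq_addr.
by rewrite -{1}back => /admissible_iter; apply.
Qed.

Lemma acyclic_admissible (A : {set 'I_n}) : admissible f A ->
  acyclic (stdres f (~: A)) -> acyclic (stdres f A) -> acyclic f.
Proof.
move=> adm acycC acycA; apply/acyclicP/forallP => x; apply/implyP.
move=> /iter_findex; rewrite -iterSr; set k := findex _ _ _ => cyc.
have [I [acycI orbitI]] : exists I,
    acyclic (stdres f I) /\ forall t, iter t f x \in I.
  have [xA | xNA] := boolP (x \in A); [exists A | exists (~: A)];
    by split=> // t; rewrite ?inE (admissible_cycle _ adm cyc) ?xA.
have restr_x : restr I x = f x by rewrite -[RHS]/(iter 1 f x) -(iter_restr orbitI).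
rewrite -restr_x (proj1 (acyclic_stdresE I) acycI x k) ?(orbitI 0) //.
by rewrite iter_restr.
Qed.

Lemma acyclicb_coprod (A : {set 'I_n}) : admissible f A ->
  acyclicb (stdres f (~: A)) && acyclicb (stdres f A) = acyclicb f.
Proof.
move=> adm; apply/andP/acyclicP => [[/acyclicP ? /acyclicP ?] | f_acyc].
  exact: acyclic_admissible adm _ _.
by split; apply/acyclicP/acyclic_stdres.
Qed.

End Restriction.

Section ShiftedConcatenation.
Variables (n m : nat) (f : {ffun 'I_n -> 'I_n}) (g : {ffun 'I_m -> 'I_m}).

Lemma shconc_lshift j : shconc f g (lshift m j) = lshift m (f j).
Proof. by rewrite /shconc ffunE (unsplitK (inl _ j)). Qed.

Lemma shconc_rshift j : shconc f g (rshift n j) = rshift n (g j).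
Proof. by rewrite /shconc ffunE (unsplitK (inr _ j)). Qed.

Lemma iter_shconc_lshift t j :
  iter t (shconc f g) (lshift m j) = lshift m (iter t f j).
Proof. by elim: t => //= t ->; rewrite shconc_lshift. Qed.

Lemma iter_shconc_rshift t j :
  iter t (shconc f g) (rshift n j) = rshift n (iter t g j).
Proof. by elim: t => //= t ->; rewrite shconc_rshift. Qed.

Lemma acyclicb_shconc : acyclicb (shconc f g) = acyclicb f && acyclicb g.
Proof.
apply/acyclicP/andP => [acyc | [/acyclicP f_acyc /acyclicP g_acyc]].
  split; apply/acyclicP => j k cyc.
    apply: (@lshift_inj n m); rewrite -shconc_lshift (acyc _ k) //.
    by rewrite iter_shconc_lshift cyc.
  apply: (@rshift_inj n m); rewrite -shconc_rshift (acyc _ k) //.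
  by rewrite iter_shconc_rshift cyc.
move=> x k; case: (split_ordP x) => j ->.
  by rewrite iter_shconc_lshift shconc_lshift => /lshift_inj /f_acyc ->.
by rewrite iter_shconc_rshift shconc_rshift => /rshift_inj /g_acyc ->.
Qed.

End ShiftedConcatenation.

Import GRing.Theory.
Local Open Scope ring_scope.

Section LinearCombinations.
Variable K : fieldType.
Implicit Types B C : eqType.

Definition lcev B (G : B -> K) (x : lc K B) : K := \sum_(p <- x) p.1 * G p.2.

Lemma coefE B (x : lc K B) b : coef x b = lcev (fun a => (a == b)%:R) x.
Proof. by apply: eq_bigr => p _; case: (p.2 == b); rewrite ?mulr1 ?mulr0. Qed.

Lemma coef_nil B b : coef ([::] : lc K B) b = 0.
Proof. exact: big_nil. Qed.

Lemma lcev_seq1 B (G : B -> K) c b : lcev G [:: (c, b)] = c * G b.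
Proof. exact: big_seq1. Qed.

Lemma eq_lcev_in B (G H : B -> K) x :
  (forall p, p \in x -> G p.2 = H p.2) -> lcev G x = lcev H x.
Proof. by move=> eqGH; apply: eq_big_seq => p /eqGH ->. Qed.

Lemma eq_lcev B (G H : B -> K) x : G =1 H -> lcev G x = lcev H x.
Proof. by move=> eqGH; apply: eq_lcev_in => p _; apply: eqGH. Qed.

Lemma lcev_eq0 B (G : B -> K) x :
  (forall p, p \in x -> G p.2 = 0) -> lcev G x = 0.
Proof. by move=> G0; rewrite /lcev big1_seq // => p /andP[_ /G0 ->]; rewrite mulr0. Qed.

Lemma lcev_lcext B C (F : B -> lc K C) (G : C -> K) x :
  lcev G (lcext F x) = lcev (fun b => lcev G (F b)) x.
Proof.
rewrite /lcev /lcext big_flatten big_map; apply: eq_bigr => p _.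
by rewrite /lcscale big_map mulr_sumr; apply: eq_bigr => q _; rewrite mulrA.
Qed.

Lemma coef_lcext B C (F : B -> lc K C) x c :
  coef (lcext F x) c = lcev (fun b => coef (F b) c) x.
Proof. by rewrite coefE lcev_lcext; apply: eq_lcev => b; rewrite coefE. Qed.

Lemma lcev_coef B (G : B -> K) x :
  lcev G x = \sum_(b <- undup (map snd x)) coef x b * G b.
Proof.
under eq_bigr do rewrite /coef mulr_suml.
rewrite exchange_big; apply: eq_big_seq => p px /=.
have p2x : p.2 \in undup (map snd x) by rewrite mem_undup map_f.
rewrite (bigD1_seq p.2) ?undup_uniq //= eqxx big1 ?addr0 // => b /negbTE.
by rewrite eq_sym => ->; rewrite mul0r.
Qed.

Lemma lcev_inSpan B (P : B -> Prop) (G : B -> K) x :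
  inSpan P x -> (forall b, P b -> G b = 0) -> lcev G x = 0.
Proof.
move=> x_in G0; rewrite lcev_coef big1 // => b _.
have [-> | Gb] := eqVneq (G b) 0; first by rewrite mulr0.
by rewrite x_in ?mul0r // => /G0 /eqP; rewrite (negbTE Gb).
Qed.

Lemma inSpan_lcext B C (P : B -> Prop) (Q : C -> Prop) (F : B -> lc K C) x :
  inSpan P x -> (forall b, P b -> inSpan Q (F b)) -> inSpan Q (lcext F x).
Proof.
move=> x_in FQ c Qc; rewrite coef_lcext.
by apply: lcev_inSpan x_in _ => b /FQ; apply.
Qed.

Lemma inSpan_terms B (Q : B -> Prop) (x : lc K B) :
  (forall p, p \in x -> Q p.2) -> inSpan Q x.
Proof.
move=> xQ b Qb; rewrite coefE; apply: lcev_eq0 => p /xQ Qp.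
by case: eqP Qp => // ->.
Qed.

Lemma inSpan_lcext_terms B C (P : B -> Prop) (Q : C -> Prop) (F : B -> lc K C) x :
  inSpan P x -> (forall b q, P b -> q \in F b -> Q q.2) -> inSpan Q (lcext F x).
Proof.
move=> x_in FQ; apply: inSpan_lcext x_in _ => b Pb.
by apply: inSpan_terms => q; apply: FQ.
Qed.

Lemma eq_inSpan B (P Q : B -> Prop) (x : lc K B) :
  (forall b, P b <-> Q b) -> inSpan P x <-> inSpan Q x.
Proof. by move=> PQ; split=> x_in b nb; apply: x_in => /PQ. Qed.

Lemma mem_lcext B C (F : B -> lc K C) x r :
  r \in lcext F x -> exists2 p, p \in x & r.2 \in [seq q.2 | q <- F p.2].
Proof.
move=> /flattenP [s /mapP [p px ->]]; rewrite /lcscale => /mapP [q qF ->].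
by exists p; last by apply/mapP; exists q.
Qed.

Definition projb B (c : pred B) (b : B) : lc K B :=
  if c b then [:: (1, b)] else [::].

Lemma lcev_projb B (G : B -> K) c b : lcev G (projb c b) = if c b then G b else 0.
Proof. by rewrite /projb; case: (c b); rewrite /= ?lcev_seq1 ?mul1r // /lcev big_nil. Qed.

Lemma coef_lcext_projb B (c : pred B) x b :
  coef (lcext (projb c) x) b = if c b then coef x b else 0.
Proof.
rewrite coef_lcext coefE; case cb: (c b).
  apply: eq_lcev => a; rewrite coefE lcev_projb.
  by case: eqP => [->|_]; rewrite ?cb //; case: (c a).
apply: lcev_eq0 => p _; rewrite coefE lcev_projb.
by case: eqP => [->|_]; rewrite ?cb //; case: (c p.2).
Qed.

Lemma inSpan_lcext_projb B (c : pred B) x : inSpan (fun b => c b) (lcext (projb c) x).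
Proof. by move=> b /negP/negbTE cb; rewrite coef_lcext_projb cb. Qed.

Lemma lcext_projb_id B (c : pred B) x :
  inSpan (fun b => c b) x -> lceq (lcext (projb c) x) x.
Proof. by move=> x_in b; rewrite coef_lcext_projb; case: ifPn => // /negP /x_in ->. Qed.

Lemma lcext_projb_eq0 B (c : pred B) x :
  lceq (lcext (projb c) x) [::] <-> inSpan (fun b => ~~ c b) x.
Proof.
split=> [x0 b /negP/negPn cb | x_in b].
  by have := x0 b; rewrite coef_lcext_projb cb coef_nil.
by rewrite coef_lcext_projb coef_nil; case: ifP => // cb; apply: x_in; rewrite cb.
Qed.

Lemma lcext_projb_graded B C (F : B -> lc K C) (cB : pred B) (cC : pred C) x :
  (forall b q, q \in F b -> cC q.2 = cB b) ->
  lceq (lcext (projb cC) (lcext F x)) (lcext F (lcext (projb cB) x)).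
Proof.
move=> graded c; rewrite !coef_lcext !lcev_lcext; apply: eq_lcev => b.
rewrite lcev_projb; case cb: (cB b).
  rewrite [RHS]coefE; apply: eq_lcev_in => q /graded cq.
  by rewrite coefE lcev_projb cq cb.
by apply: lcev_eq0 => q /graded cq; rewrite coefE lcev_projb cq cb.
Qed.

End LinearCombinations.

Arguments projb {K B} c b.

Section EFSym.
Variable K : fieldType.
Implicit Types (a b c : EF) (x y : lc K EF).

Definition acyclicEF b : bool := acyclicb (tagged b).

Lemma acyclicEFP b : reflect (acyclicB b) (acyclicEF b).
Proof. exact: acyclicP. Qed.

Lemma inSpan_acyclicB x : inSpan acyclicB x <-> inSpan (fun b => acyclicEF b) x.
Proof. by apply: eq_inSpan => b; apply: rwP (acyclicEFP b). Qed.

Lemma inSpan_nonacyclicB x :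
  inSpan nonacyclicB x <-> inSpan (fun b => ~~ acyclicEF b) x.
Proof. by apply: eq_inSpan => b; apply: rwP (negPP (acyclicEFP b)). Qed.

Lemma acyclicEF_mulB a b : acyclicEF (mulB a b) = acyclicEF a && acyclicEF b.
Proof. exact: acyclicb_shconc. Qed.

Lemma acyclicEF_deg0 b : efdeg b = 0%N -> acyclicEF b.
Proof. by case: b => n f /= n0; subst n; apply/acyclicP => -[]. Qed.

Lemma coprodB_graded b p :
  p \in coprodB K b -> acyclicEF p.2.1 && acyclicEF p.2.2 = acyclicEF b.
Proof.
by case: b => n f /mapP [A]; rewrite mem_enum => adm ->; apply: acyclicb_coprod.
Qed.

Lemma mem_efmul x y r : r \in efmul x y ->
  exists2 a, a \in x & exists2 b, b \in y & r.2 = mulB a.2 b.2.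
Proof.
move=> /mem_lcext [a ax /mapP [q /mem_lcext [b yb]]].
by rewrite inE => /eqP -> ->; exists a => //; exists b.
Qed.

Lemma antipF_graded k b p : p \in antipF K k b -> acyclicEF p.2 = acyclicEF b.
Proof.
elim: k b p => [|k IH] [n f] p //=; case: eqP => [_|_]; first by rewrite inE => /eqP ->.
move=> /mapP [q /flattenP [s /mapP [A]]]; rewrite mem_enum => /andP [adm _] -> qA ->.
have [a /IH acyc_a [r]] := mem_efmul qA; rewrite inE => /eqP -> ->.
by rewrite acyclicEF_mulB acyc_a; apply: acyclicb_coprod.
Qed.

Lemma inSpan_efmul (P Q R : EF -> Prop) x y :
  inSpan P x -> inSpan Q y -> (forall a b, P a -> Q b -> R (mulB a b)) ->
  inSpan R (efmul x y).
Proof.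
move=> x_in y_in PQR; apply: inSpan_lcext x_in _ => a Pa.
apply: inSpan_lcext_terms y_in _ => b q Qb; rewrite inE => /eqP -> /=.
exact: PQR.
Qed.

Lemma efcounitE x : efcounit x = lcev (fun b => (efdeg b == 0%N)%:R) x.
Proof. by apply: eq_bigr => p _; case: (efdeg p.2 == 0%N); rewrite ?mulr1 ?mulr0. Qed.

Lemma not_nonacyclicB b : ~ nonacyclicB b -> acyclicEF b.
Proof. by move=> nb; case: (acyclicEFP b) => // /nb []. Qed.

Lemma hopf_ideal_nonacyclic : hopf_ideal K nonacyclicB.
Proof.
split=> [x y | x | x | x] /inSpan_nonacyclicB x_in.
- have acyc_mul a b : ~~ acyclicEF a || ~~ acyclicEF b -> ~~ acyclicEF (mulB a b).
    by rewrite acyclicEF_mulB negb_and.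
  have y_in : inSpan (fun _ => True) y by [].
  split; apply/inSpan_nonacyclicB;
    [apply: inSpan_efmul x_in y_in _ | apply: inSpan_efmul y_in x_in _];
    by move=> a b na nb; apply: acyc_mul; rewrite ?na ?nb ?orbT.
- move=> b1 b2 /not_nonacyclicB acyc1 /not_nonacyclicB acyc2.
  have cop_in : inSpan (fun p : EF * EF => ~~ (acyclicEF p.1 && acyclicEF p.2)) (efcop x).
    by apply: inSpan_lcext_terms x_in _ => b p nb /coprodB_graded ->.
  by apply: cop_in; rewrite /= acyc1 acyc2.
- rewrite efcounitE; apply: lcev_inSpan x_in _ => b /negbTE nb.
  by case: eqP => // /acyclicEF_deg0; rewrite nb.
- apply/inSpan_nonacyclicB; apply: inSpan_lcext_terms x_in _ => b q nb.
  by move=> /antipF_graded ->.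
Qed.

Lemma inSpan_efunit : inSpan (fun b => acyclicEF b) (efunit K).
Proof. by apply: inSpan_terms => p; rewrite inE => /eqP -> /=; apply: acyclicEF_deg0. Qed.

Lemma hopf_subalgebra_acyclic : hopf_subalgebra K acyclicB.
Proof.
split=> [|x y /inSpan_acyclicB x_in /inSpan_acyclicB y_in |
         x /inSpan_acyclicB x_in | x /inSpan_acyclicB x_in].
- exact/inSpan_acyclicB/inSpan_efunit.
- apply/inSpan_acyclicB; apply: inSpan_efmul x_in y_in _ => a b acyc_a acyc_b.
  by rewrite acyclicEF_mulB acyc_a.
- move=> b1 b2 nb.
  have cop_in : inSpan (fun p : EF * EF => acyclicEF p.1 && acyclicEF p.2) (efcop x).
    by apply: inSpan_lcext_terms x_in _ => b p acyc_b /coprodB_graded ->.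
  by apply: cop_in => /andP [/acyclicEFP acyc1 /acyclicEFP acyc2]; apply: nb.
- apply/inSpan_acyclicB; apply: inSpan_lcext_terms x_in _ => b q acyc_b.
  by move=> /antipF_graded ->.
Qed.

Definition acyclic_proj : EF -> lc K EF := projb acyclicEF.

Lemma lcev_efmul (G : EF -> K) x y :
  lcev G (efmul x y) = lcev (fun a => lcev (fun b => G (mulB a b)) y) x.
Proof.
rewrite lcev_lcext; apply: eq_lcev => a.
by rewrite lcev_lcext; apply: eq_lcev => b; rewrite lcev_seq1 mul1r.
Qed.

Lemma tensor_map_projb (c : pred EF) (t : lc K (prod EF EF)) :
  lceq (tensor_map (projb c) t) (lcext (projb (fun p : EF * EF => c p.1 && c p.2)) t).
Proof.
move=> q; rewrite !coef_lcext; apply: eq_lcev => p.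
by rewrite /projb; case: (c p.1); case: (c p.2); rewrite //= mulr1 -surjective_pairing.
Qed.

Lemma hopf_morphism_acyclic_proj : hopf_morphism acyclic_proj.
Proof.
split=> [|x y c | x c | x | x].
- exact/lcext_projb_id/inSpan_efunit.
- rewrite coef_lcext coefE !lcev_efmul !lcev_lcext; apply: eq_lcev => a.
  rewrite lcev_projb; case acyc_a: (acyclicEF a).
    rewrite lcev_lcext; apply: eq_lcev => b.
    by rewrite coefE !lcev_projb acyclicEF_mulB acyc_a.
  by apply: lcev_eq0 => p _; rewrite coefE lcev_projb acyclicEF_mulB acyc_a.
- rewrite tensor_map_projb.
  by rewrite (lcext_projb_graded
    (cC := fun p : EF * EF => acyclicEF p.1 && acyclicEF p.2) x (@coprodB_graded)).
- rewrite !efcounitE lcev_lcext; apply: eq_lcev => b; rewrite lcev_projb.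
  by case: ifPn => // /negbTE nb; case: eqP => // /acyclicEF_deg0; rewrite nb.
- by apply: lcext_projb_graded => b q /antipF_graded.
Qed.

End EFSym.

Theorem mainTheorem14 (K : fieldType) :
  hopf_ideal K nonacyclicB /\
  hopf_subalgebra K acyclicB /\
  exists phi : EF -> lc K EF,
    [/\ hopf_morphism phi,
        (forall x : lc K EF, inSpan acyclicB (lcext phi x)),
        (forall y : lc K EF, inSpan acyclicB y ->
           exists x : lc K EF, lceq (lcext phi x) y)
      & (forall x : lc K EF, lceq (lcext phi x) [::] <-> inSpan nonacyclicB x)].
Proof.
split; first exact: hopf_ideal_nonacyclic.
split; first exact: hopf_subalgebra_acyclic.
exists (acyclic_proj K); split.
- exact: hopf_morphism_acyclic_proj.
- by move=> x; apply/inSpan_acyclicB/inSpan_lcext_projb.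
- by move=> y /inSpan_acyclicB y_in; exists y; apply: lcext_projb_id.
- by move=> x; apply: iff_trans (lcext_projb_eq0 _ _) (iff_sym (inSpan_nonacyclicB x)).
Qed.
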